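(* Let $\nu,T>0$, $W(x_1,x_2,x_3):=(\sin x_2,\sin x_3,\sin x_1)$ and $\psi(x):=e^{-\frac{|x|^2}{8\nu T}}$ on $\mathbb{R}^3$. Then $(0,0,0)$ is a hyperbolic zero of the vector field $\mathop{\mathrm{curl}}\mathop{\mathrm{curl}}(\psi W)$.
   Context: A zero $x_0$ of a $C^1$ vector field $v$ is hyperbolic if $v(x_0)=0$, $\nabla v(x_0)$ is invertible and has no eigenvalue with zero real part. *)

From HB Require Import structures.
From mathcomp Require Import all_boot all_order all_algebra.
From mathcomp Require Import all_classical all_reals.
From mathcomp Require Import topology normedtype sequences derive exp trigo.
From mathcomp Require Import complex.
Set Implicit Arguments. Unset Strict Implicit. Unset Printing Implicit Defensive.
Import Order.TTheory GRing.Theory Num.Theory.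
Import numFieldNormedType.Exports.
Local Open Scope ring_scope.

Section Defs.
Variable R : realType.
Local Notation V3 := 'rV[R]_3.

Definition i1 : 'I_3 := @Ordinal 3 0 isT.
Definition i2 : 'I_3 := @Ordinal 3 1 isT.
Definition i3 : 'I_3 := @Ordinal 3 2 isT.

Definition basis3 (i : 'I_3) : V3 := delta_mx 0 i.

Definition pd (i : 'I_3) (g : V3 -> R) (x : V3) : R := 'D_(basis3 i) g x.

Definition comp (F : V3 -> V3) (i : 'I_3) : V3 -> R := fun x => F x ord0 i.

Definition curl (F : V3 -> V3) : V3 -> V3 := fun x =>
  \row_(k < 3)
    (if k == i1 then pd i2 (comp F i3) x - pd i3 (comp F i2) x
     else if k == i2 then pd i3 (comp F i1) x - pd i1 (comp F i3) x
     else pd i1 (comp F i2) x - pd i2 (comp F i1) x).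

Definition W (x : V3) : V3 :=
  \row_(k < 3)
    (if k == i1 then sin (x ord0 i2)
     else if k == i2 then sin (x ord0 i3)
     else sin (x ord0 i1)).

Definition sqnorm (x : V3) : R := \sum_(i < 3) x ord0 i ^+ 2.

Definition psi (nu T : R) (x : V3) : R := expR (- (sqnorm x / (8 * nu * T))).

Definition psiW (nu T : R) (x : V3) : V3 := psi nu T x *: W x.

Definition C1 (v : V3 -> V3) : Prop :=
  (forall x, differentiable v x) /\ continuous (fun x => 'J v x).

Definition hyperbolic_zero (v : V3 -> V3) (x0 : V3) : Prop :=
  [/\ C1 v, v x0 = 0, 'J v x0 \in unitmx &
      forall lam : R[i],
        eigenvalue (map_mx (fun r : R => (r%:C)%C) ('J v x0)) lam ->
        complex.Re lam != 0].

End Defs.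

From Pilot Require Import Defs.
From HB Require Import structures.
From mathcomp Require Import all_boot all_order all_algebra.
From mathcomp Require Import all_classical all_reals.
From mathcomp Require Import topology normedtype sequences derive exp trigo.
From mathcomp Require Import complex.
From mathcomp Require Import ring lra.
Import Order.TTheory GRing.Theory Num.Theory.
Import numFieldNormedType.Exports.
Local Open Scope ring_scope.

(* The field [v = curl curl (psi W)] is a polynomial expression in sines,
   cosines and one exponential of the coordinates.  Representing its
   components as syntax trees with a symbolic partial derivative makes
   smoothness automatic and reduces the Jacobian at the origin to a
   computation: with [a = 1 / (8 nu T)] it is the zero-diagonal circulant
   matrix with entries [-2a] and [1 + 8a].  Such a circulant [circ(0, b, c)]
   has determinant [b^3 + c^3] and characteristic polynomial
   [X^3 - 3bcX - (b^3 + c^3)], whose value at a purely imaginary [iy] has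
   real part [-(b^3 + c^3)]; this is nonzero as soon as [b + c], here
   [1 + 6a], is. *)

(* Constants are integers and the real parameter is the formal [EPar], so
   that [dexpr] and [at_origin] compute on closed syntax by [vm_compute]. *)
Inductive expr (n : nat) : Type :=
| ECst of int
| EPar
| ECoord of 'I_n
| EAdd of expr n & expr n
| EMul of expr n & expr n
| ESin of expr n
| ECos of expr n
| EExp of expr n.
Arguments ECst {n}.
Arguments EPar {n}.
Arguments ECoord {n}.
Arguments EAdd {n}.
Arguments EMul {n}.
Arguments ESin {n}.
Arguments ECos {n}.
Arguments EExp {n}.

Definition is_zero {n} (e : expr n) : bool :=
  if e is ECst (Posz 0) then true else false.
Definition is_one {n} (e : expr n) : bool :=
  if e is ECst (Posz 1) then true else false.

Definition eadd {n} (e1 e2 : expr n) : expr n :=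
  if is_zero e1 then e2 else if is_zero e2 then e1 else EAdd e1 e2.
Definition emul {n} (e1 e2 : expr n) : expr n :=
  if is_zero e1 || is_zero e2 then ECst 0
  else if is_one e1 then e2 else if is_one e2 then e1 else EMul e1 e2.

Fixpoint dexpr {n} (i : 'I_n) (e : expr n) : expr n :=
  match e with
  | ECst _ | EPar => ECst 0
  | ECoord j => if i == j then ECst 1 else ECst 0
  | EAdd e1 e2 => eadd (dexpr i e1) (dexpr i e2)
  | EMul e1 e2 => eadd (emul e1 (dexpr i e2)) (emul e2 (dexpr i e1))
  | ESin e => emul (ECos e) (dexpr i e)
  | ECos e => emul (emul (ECst (-1)) (ESin e)) (dexpr i e)
  | EExp e => emul (EExp e) (dexpr i e)
  end.

Fixpoint at_origin {n} (e : expr n) : expr n :=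
  match e with
  | ECst _ | EPar => e
  | ECoord _ => ECst 0
  | EAdd e1 e2 => eadd (at_origin e1) (at_origin e2)
  | EMul e1 e2 => emul (at_origin e1) (at_origin e2)
  | ESin e => let e' := at_origin e in if is_zero e' then ECst 0 else ESin e'
  | ECos e => let e' := at_origin e in if is_zero e' then ECst 1 else ECos e'
  | EExp e => let e' := at_origin e in if is_zero e' then ECst 1 else EExp e'
  end.

Lemma derive_coord {R : realFieldType} {n : nat} (x v : 'rV[R]_n) (i : 'I_n) :
  'D_v (fun y : 'rV[R]_n => y ord0 i) x = v ord0 i.
Proof.
have := congr1 (fun M : 'rV[R]_n => M ord0 i) (derive_mx (@derivable_id _ _ x v)).
by rewrite derive_id mxE.
Qed.

Lemma derive_comp_real {R : realFieldType} {V : normedModType R}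
    {f : V -> R} {g : R -> R} {d : R} {x : V} (v : V) :
  differentiable f x -> is_derive (f x) 1 g d ->
  'D_v (fun y => g (f y)) x = d * 'D_v f x.
Proof.
move=> df dg.
have dgf : differentiable g (f x) by apply/derivable1_diffP; exact: ex_derive.
rewrite deriveE; last exact: differentiable_comp.
by rewrite diff_comp // /= diff1E // derive1E derive_val -deriveE // mulrC.
Qed.

Lemma continuous_matrix {R : numFieldType} {T : topologicalType} {m n : nat}
    (G : 'I_m -> 'I_n -> T -> R) (x : T) :
  (forall i j, {for x, continuous (G i j)}) ->
  {for x, continuous (fun y => \matrix_(i, j) G i j y)}.
Proof.
move=> cG.
have -> : (fun y => \matrix_(i, j) G i j y) =
    \sum_i \sum_j (fun y => G i j y *: (delta_mx i j : 'M[R]_(m, n))).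
  apply/funext => y; rewrite [LHS]matrix_sum_delta fct_sumE.
  by apply: eq_bigr => i _; rewrite fct_sumE; apply: eq_bigr => j _; rewrite mxE.
elim/big_ind: _ => [|f g cf cg|i _]; [exact: cst_continuous|exact: continuousD|].
elim/big_ind: _ => [|f g cf cg|j _]; [exact: cst_continuous|exact: continuousD|].
exact: continuousZr_tmp.
Qed.

Section Eval.
Context {R : realType} {n : nat} (a : R).

Fixpoint eval (e : expr n) (x : 'rV[R]_n) : R :=
  match e with
  | ECst z => z%:~R
  | EPar => a
  | ECoord i => x ord0 i
  | EAdd e1 e2 => eval e1 x + eval e2 x
  | EMul e1 e2 => eval e1 x * eval e2 x
  | ESin e => sin (eval e x)
  | ECos e => cos (eval e x)
  | EExp e => expR (eval e x)
  end.

Lemma eval_is_zero x e : is_zero e -> eval e x = 0.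
Proof. by case: e => // -[] // -[]. Qed.

Lemma eval_is_one x e : is_one e -> eval e x = 1.
Proof. by case: e => // -[] // -[] // -[]. Qed.

Lemma eval_eadd e1 e2 x : eval (eadd e1 e2) x = eval e1 x + eval e2 x.
Proof.
rewrite /eadd; case: ifP => [/(eval_is_zero x)->|_]; first by rewrite add0r.
by case: ifP => [/(eval_is_zero x)->|_] //; rewrite addr0.
Qed.

Lemma eval_emul e1 e2 x : eval (emul e1 e2) x = eval e1 x * eval e2 x.
Proof.
rewrite /emul; case: ifP => [/orP[]/(eval_is_zero x)->|_] /=;
  rewrite ?mul0r ?mulr0 //.
case: ifP => [/(eval_is_one x)->|_]; first by rewrite mul1r.
by case: ifP => [/(eval_is_one x)->|_] //; rewrite mulr1.
Qed.

Lemma eval_at_origin e x : eval (at_origin e) x = eval e 0.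
Proof.
elim: e => //= [i|e1 IH1 e2 IH2|e1 IH1 e2 IH2|e IH|e IH|e IH].
- by rewrite mxE.
- by rewrite eval_eadd IH1 IH2.
- by rewrite eval_emul IH1 IH2.
- by case: ifP => [/(eval_is_zero x)|_] /=; rewrite IH // => ->; rewrite sin0.
- by case: ifP => [/(eval_is_zero x)|_] /=; rewrite IH // => ->; rewrite cos0.
- by case: ifP => [/(eval_is_zero x)|_] /=; rewrite IH // => ->; rewrite expR0.
Qed.

Lemma eval_differentiable e x : differentiable (eval e) x.
Proof.
elim: e x => [z||j|e1 IH1 e2 IH2|e1 IH1 e2 IH2|e IH|e IH|e IH] x /=;
  [exact: differentiable_cst|exact: differentiable_cst|exact: differentiable_coord
  |exact: differentiableD|exact: differentiableM|..].
all: by apply: differentiable_comp => //; apply/derivable1_diffP; exact: ex_derive.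
Qed.

Lemma derive_eval e i x : 'D_(delta_mx 0 i) (eval e) x = eval (dexpr i e) x.
Proof.
have dv e' y : derivable (eval e') y (delta_mx 0 i).
  exact/diff_derivable/eval_differentiable.
elim: e x => [z||j|e1 IH1 e2 IH2|e1 IH1 e2 IH2|e IH|e IH|e IH] x /=.
- exact: (derive_cst (z%:~R : R)).
- exact: (derive_cst a).
- by rewrite derive_coord mxE eqxx /= eq_sym; case: (i == j).
- by rewrite eval_eadd -IH1 -IH2 (deriveD (dv e1 x) (dv e2 x)).
- by rewrite eval_eadd !eval_emul -IH1 -IH2 (deriveM (dv e1 x) (dv e2 x)).
- by rewrite (derive_comp_real _ (eval_differentiable _ _) (is_derive_sin _))
    eval_emul IH.
- rewrite (derive_comp_real _ (eval_differentiable _ _) (is_derive_cos _)).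
  by rewrite !eval_emul IH /=; ring.
- by rewrite (derive_comp_real _ (eval_differentiable _ _) (is_derive_expR _))
    eval_emul IH.
Qed.

Context {m : nat} (E : 'I_m -> expr n).

Definition eval_field (x : 'rV[R]_n) : 'rV[R]_m := \row_k eval (E k) x.

Lemma eval_field_differentiable x : differentiable eval_field x.
Proof.
have -> : eval_field =
    \sum_k (fun y => eval (E k) y *: (delta_mx 0 k : 'rV[R]_m)).
  apply/funext => y; rewrite fct_sumE [LHS]row_sum_delta.
  by under eq_bigr do rewrite mxE.
apply: differentiable_sum => k; apply: differentiableZl.
exact: eval_differentiable.
Qed.

Lemma jacobian_eval_field x :
  'J eval_field x = \matrix_(i, j) eval (dexpr i (E j)) x.
Proof.
apply/matrixP => i j; rewrite /jacobian !mxE -deriveE;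
  last exact: eval_field_differentiable.
rewrite derive_mx; last exact/diff_derivable/eval_field_differentiable.
by rewrite mxE -derive_eval; under [X in 'D__ X _]funext do rewrite mxE.
Qed.

Lemma continuous_jacobian_eval_field : continuous (fun x => 'J eval_field x).
Proof.
have -> : (fun x => 'J eval_field x) =
    fun x => \matrix_(i, j) eval (dexpr i (E j)) x.
  by apply/funext => x; exact: jacobian_eval_field.
move=> x; apply: continuous_matrix => i j.
exact/differentiable_continuous/eval_differentiable.
Qed.

End Eval.

Lemma det_mx33 {F : comNzRingType} (M : 'M[F]_3) :
  \det M = M 0 0 * M 1 1 * M 2 2 + M 0 1 * M 1 2 * M 2 0 + M 0 2 * M 1 0 * M 2 1
         - M 0 2 * M 1 1 * M 2 0 - M 0 0 * M 1 2 * M 2 1 - M 0 1 * M 1 0 * M 2 2.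
Proof.
pose m (i j : nat) := M (inord i) (inord j).
have -> : M = \matrix_(i, j) m i j by apply/matrixP => i j; rewrite mxE /m !inord_val.
rewrite (expand_det_row _ 0) !big_ord_recl big_ord0 /cofactor.
rewrite !(expand_det_row _ 0) !big_ord_recl !big_ord0 /cofactor !det_mx11 !mxE /=.
ring.
Qed.

Definition circulant3 {F : nzRingType} (b c : F) : 'M[F]_3 :=
  \matrix_(i, j) if j == i + 1 then b else if i == j + 1 then c else 0.

Lemma map_circulant3 {F G : nzRingType} (f : F -> G) (b c : F) :
  f 0 = 0 -> map_mx f (circulant3 b c) = circulant3 (f b) (f c).
Proof.
by move=> f0; apply/matrixP => i j; rewrite !mxE; case: ifP => // _; case: ifP.
Qed.

Lemma det_circulant3_sub {F : comNzRingType} (lam b c : F) :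
  \det (lam%:M - circulant3 b c) = lam ^+ 3 - 3 * b * c * lam - (b ^+ 3 + c ^+ 3).
Proof. by rewrite det_mx33 !mxE /=; ring. Qed.

Lemma det_circulant3 {F : comNzRingType} (b c : F) :
  \det (circulant3 b c) = b ^+ 3 + c ^+ 3.
Proof. by rewrite det_mx33 !mxE /=; ring. Qed.

Lemma sum_cubes_neq0 {F : realFieldType} (b c : F) :
  b + c != 0 -> b ^+ 3 + c ^+ 3 != 0.
Proof.
move=> bc0.
have -> : b ^+ 3 + c ^+ 3 = (b + c) * ((b - c / 2) ^+ 2 + 3 / 4 * c ^+ 2).
  by field.
rewrite mulf_neq0 //; apply: contra bc0 => /eqP sq0.
have := sqr_ge0 (b - c / 2); have := sqr_ge0 c => c2 bc2.
have c0 : c = 0 by nra.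
by rewrite c0 addr0; nra.
Qed.

Lemma circulant3_unitmx {F : realFieldType} (b c : F) :
  b + c != 0 -> circulant3 b c \in unitmx.
Proof. by move=> bc0; rewrite unitmxE unitfE det_circulant3 sum_cubes_neq0. Qed.

Lemma circulant3_eigenvalue_Re_neq0 {R : rcfType} (b c : R) (lam : R[i]) :
  b + c != 0 -> eigenvalue (circulant3 b%:C c%:C)%C lam -> complex.Re lam != 0.
Proof.
move=> bc0 /eigenvalueP[u uM u0]; apply/eqP => Re0.
have char0 : \det (lam%:M - circulant3 b%:C%C c%:C%C) = 0.
  by apply/eqP/det0P; exists u; rewrite // mulmxBr uM mul_mx_scalar subrr.
move: char0 {uM}; rewrite det_circulant3_sub.
case: lam Re0 => x y /= -> /(congr1 (@complex.Re R)) /= bc3.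
suff /eqP : b ^+ 3 + c ^+ 3 = 0 by rewrite (negPf (sum_cubes_neq0 b c bc0)).
by rewrite -[RHS]oppr0 -bc3; ring.
Qed.

Definition psi_expr : expr 3 :=
  EExp (EMul (EMul (ECst (-1)) EPar)
    (EAdd (EAdd (EMul (ECoord i1) (ECoord i1)) (EMul (ECoord i2) (ECoord i2)))
          (EMul (ECoord i3) (ECoord i3)))).

Definition psiW_expr (k : 'I_3) : expr 3 :=
  EMul psi_expr (ESin (ECoord (if k == i1 then i2 else if k == i2 then i3 else i1))).

Definition curl_expr (E : 'I_3 -> expr 3) (k : 'I_3) : expr 3 :=
  if k == i1 then EAdd (dexpr i2 (E i3)) (EMul (ECst (-1)) (dexpr i3 (E i2)))
  else if k == i2 then EAdd (dexpr i3 (E i1)) (EMul (ECst (-1)) (dexpr i1 (E i3)))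
  else EAdd (dexpr i1 (E i2)) (EMul (ECst (-1)) (dexpr i2 (E i1))).

Definition curl_curl_psiW_expr : 'I_3 -> expr 3 := curl_expr (curl_expr psiW_expr).

Section CurlCurl.
Context {R : realType} (nu T : R).
Let a := (8 * nu * T)^-1.

Lemma comp_psiW k : Defs.comp (psiW nu T) k = eval a (psiW_expr k).
Proof.
apply/funext => x; rewrite /Defs.comp /psiW.
change ((psi nu T x *: W x) ord0 k) with (scalemx (psi nu T x) (W x) ord0 k).
rewrite !mxE /=; congr (_ * _); last by case: ifP => _ //; case: ifP.
rewrite /psi /sqnorm !big_ord_recr big_ord0 /=.
pose y (j : nat) := x ord0 (inord j).
have -> : x ord0 = fun j => y j by apply/funext => j; rewrite /y inord_val.
by rewrite /= /a; congr expR; ring.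
Qed.

Lemma comp_curl {F : 'rV[R]_3 -> 'rV[R]_3} {E : 'I_3 -> expr 3} :
  (forall k, Defs.comp F k = eval a (E k)) ->
  forall k, Defs.comp (curl F) k = eval a (curl_expr E k).
Proof.
move=> FE k; apply/funext => x.
rewrite [LHS]/Defs.comp /curl mxE /curl_expr /pd /basis3 !FE !derive_eval.
by case: ifP => _ /=; [|case: ifP => _ /=]; ring.
Qed.

Lemma curl_curl_psiWE :
  curl (curl (psiW nu T)) = eval_field a curl_curl_psiW_expr.
Proof.
have E := comp_curl (comp_curl comp_psiW).
by apply/funext => x; apply/rowP => k; rewrite [RHS]mxE -E.
Qed.

Ltac compute_at_origin :=
  match goal with |- context [at_origin ?e] =>
    let r := eval vm_compute in (at_origin e) in
    rewrite (_ : at_origin e = r); last by vm_compute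
  end.

Lemma curl_curl_psiW_at0 : eval_field a curl_curl_psiW_expr 0 = 0.
Proof.
apply/rowP => k; rewrite !mxE -(eval_at_origin a _ 0).
by case: k => [[|[|[|k]]] Hk] //; compute_at_origin.
Qed.

Lemma jacobian_curl_curl_psiW_at0 :
  'J (eval_field a curl_curl_psiW_expr) 0 = circulant3 (-2 * a) (1 + 8 * a).
Proof.
rewrite jacobian_eval_field; apply/matrixP => i j.
rewrite !mxE -(eval_at_origin a _ 0).
by case: i => [[|[|[|i]]] Hi] //; case: j => [[|[|[|j]]] Hj] //;
  compute_at_origin => /=; ring.
Qed.

End CurlCurl.

Theorem proposition4p6 (R : realType) (nu T : R) :
  0 < nu -> 0 < T ->
  hyperbolic_zero (curl (curl (psiW nu T))) 0.
Proof.
move=> nu_gt0 T_gt0; set a := (8 * nu * T)^-1.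
have a_gt0 : 0 < a by rewrite invr_gt0 !mulr_gt0.
have bc_neq0 : -2 * a + (1 + 8 * a) != 0 by rewrite lt0r_neq0 //; lra.
rewrite curl_curl_psiWE; split.
- split; [exact: eval_field_differentiable | exact: continuous_jacobian_eval_field].
- exact: curl_curl_psiW_at0.
- by rewrite jacobian_curl_curl_psiW_at0 circulant3_unitmx.
- rewrite jacobian_curl_curl_psiW_at0 map_circulant3 //.
  move=> lam; exact: circulant3_eigenvalue_Re_neq0.
Qed.
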